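(* Let $(k_n)_{n\geq1}$ be scalars and let $\kappa$ be the infinitesimal character of the gap-insertion Hopf algebra $\mathbf{H}$ of noncrossing partitions with $\kappa(J_n)=k_n$ for $n\geq1$, where $J_n=\{\{1\},\dots,\{n\}\}$, and $\kappa(P)=0$ for every other noncrossing partition. Let $K$ be the character of $\mathbf{B}$ with $K(P)=\kappa(P)$ for all nonempty noncrossing partitions $P$, and $\mathcal{E}_\prec(\kappa)$ the unique $\phi\in\mathbf H^*$ with $\phi=\varepsilon+\kappa\prec\phi$. Then for every noncrossing partition $P$ of $[n]$ with $k$ blocks, $$\mathcal{E}_\prec(\kappa)(P)=(\psi_\prec\curvearrowleft K)(P)=\sum_{Q\geq P}K(P/Q)=\begin{cases}0&\text{if }k<n,\\ \displaystyle\sum_{Q\in\operatorname{NCP}(n)}\prod_{\pi\in Q}k_{\sharp\pi}&\text{if }k=n,\end{cases}$$ where $\psi_\prec$ is the unique element of $\mathbf H^*$ with $\psi_\prec=\varepsilon+e\prec\psi_\prec$ and the middle sum runs over noncrossing partitions $Q$ of $[n]$ coarser than $P$.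
   Context: $\operatorname{NCP}(n)$: noncrossing partitions of $[n]$ (no $a<c<b<d$ with $a,b$ in one block and $c,d$ in another); partitions of finite linearly ordered sets are identified with partitions of $[n]$ via the order-preserving bijection; $P_{|X}$ induced partition; $\sharp\pi$ block size. $\operatorname{Conv}(X)=\{\min X,\dots,\max X\}$; on blocks $\pi\to\rho$ iff $\operatorname{Conv}(\pi)\cap\rho\neq\emptyset$ (transitively closed). Upperset $U$: ($\pi\in U,\pi\to\rho$)$\Rightarrow\rho\in U$; lowerset $L$: ($\pi\in L,\sigma\to\pi$)$\Rightarrow\sigma\in L$. Cut $(L,U)$: lowerset $L$ and complement $U$; $L$ identified with the restriction of $P$ to the union of its blocks, elements $x_1<\dots<x_k$; $D_0=\{y<x_1\}$, $D_i=\{x_i<y<x_{i+1}\}$, $D_k=\{y>x_k\}$, $U_i=P_{|D_i}$, $\overline U$ ordered product of nonempty $U_i$. $\mathbf H$: free associative unital algebra on nonempty noncrossing partitions; basis of multipartitions (viewed as partitions of $[n_1+\dots+n_r]$ by shifting); cuts of multipartitions are tuples of cuts, $L=L_1\cdots L_r$, $\overline U=\overline{U_1}\cdots\overline{U_r}$. Counit $\varepsilon$. $\Delta_\prec(P)=\sum_{\text{cuts},1\in L}L\otimes\overline U$; $(f\prec g)(\mathbf1)=0$, $(f\prec g)(x)=(f\otimes g)\Delta_\prec(x)$ on nonempty multipartitions. Infinitesimal characters: linear forms vanishing on $\mathbf1$ and on products of two nonempty monomials. $e$: infinitesimal character with $e(P)=1$ for one-block noncrossing $P$ and $0$ on other noncrossing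 partitions. $\mathbf B$: free commutative unital algebra on nonempty noncrossing partitions; characters are unital algebra maps to $\mathbb K$. For noncrossing $P\leq Q$ (refinement), $Q=\{\tau_1,\dots,\tau_l\}$, $P/Q=P_{|\tau_1}\cdots P_{|\tau_l}$. Coaction $\rho(P)=\sum_{Q\geq P\text{ noncrossing}}Q\otimes P/Q$ (algebra morphism $\mathbf H\to\mathbf H\otimes\mathbf B$); $\alpha\curvearrowleft\phi=(\alpha\otimes\phi)\circ\rho$. *)

From HB Require Import structures.
From mathcomp Require Import all_boot all_algebra.
Set Implicit Arguments. Unset Strict Implicit. Unset Printing Implicit Defensive.
Import GRing.Theory.

(* A (possibly empty) partition-candidate of [n] = 'I_n (0-based: 'I_n stands
   for {1,...,n} via i |-> i+1, order preserved).  Generators of H are the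
   nonempty noncrossing partitions, packaged with their size. *)
Definition ncp := {n : nat & {set {set 'I_n}}}.
Definition mkncp n (P : {set {set 'I_n}}) : ncp := existT _ n P.

Definition noncrossing n (P : {set {set 'I_n}}) : bool :=
  [forall B in P, forall C in P, (B != C) ==>
     [forall a in B, forall b in B, forall c in C, forall d in C,
        ~~ [&& (a < c)%N, (c < b)%N & (b < d)%N]]].

Definition isNCP n (P : {set {set 'I_n}}) : bool :=
  partition P [set: 'I_n] && noncrossing P.

Definition ncp_ok (p : ncp) : bool := (0 < tag p)%N && isNCP (tagged p).

(* multipartitions = words of generators (basis of H) *)
Definition validw (w : seq ncp) : bool := all ncp_ok w.

(* induced partition P_{|X}, transported to [#|X|] by the order-preserving
   bijection enum_val : 'I_#|X| -> X *)
Definition restrict n (P : {set {set 'I_n}}) (X : {set 'I_n})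
  : {set {set 'I_#|X|}} :=
  [set [set j : 'I_#|X| | enum_val j \in B] | B : {set 'I_n} in P] :\ set0.
Definition restr n (P : {set {set 'I_n}}) (X : {set 'I_n}) : ncp :=
  mkncp (restrict P X).

Definition conv n (X : {set 'I_n}) : {set 'I_n} :=
  [set i : 'I_n | [exists a in X, exists b in X, (a <= i)%N && (i <= b)%N]].
Definition arrow0 n (P : {set {set 'I_n}}) : rel {set 'I_n} :=
  fun pi rho => [&& pi \in P, rho \in P & ~~ [disjoint conv pi & rho]].
Definition arrow n (P : {set {set 'I_n}}) : rel {set 'I_n} :=
  connect (arrow0 P).
Definition lowerset n (P L : {set {set 'I_n}}) : bool :=
  (L \subset P) &&
  [forall pi in L, forall sigma in P, arrow P sigma pi ==> (sigma \in L)].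

Definition gap n (S : {set 'I_n}) (i : nat) : {set 'I_n} :=
  [set y : 'I_n | (y \notin S) && (#|[set x in S | (x < y)%N]| == i)].

Definition ubar n (P L : {set {set 'I_n}}) : seq ncp :=
  [seq restr P (gap (cover L) i) |
     i <- [seq i <- iota 0 #|cover L|.+1 | gap (cover L) i != set0]].
(* L as an element of H (empty partition = unit = empty word) *)
Definition lword n (P L : {set {set 'I_n}}) : seq ncp :=
  if L == set0 then [::] else [:: restr P (cover L)].
Definition first_in n (L : {set {set 'I_n}}) : bool :=
  [exists i in cover L, val i == 0%N].

Definition cuts (p : ncp) : seq (bool * seq ncp * seq ncp) :=
  let: existT n P := p in
  [seq (first_in L, lword P L, ubar P L) |
     L <- [seq L <- enum (powerset P) | lowerset P L]].

Definition combine (c : seq ncp * seq ncp) (d : seq ncp * seq ncp) :=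
  (c.1 ++ d.1, c.2 ++ d.2).

Definition allcuts (w : seq ncp) : seq (seq ncp * seq ncp) :=
  foldr (fun p acc => [seq combine (c.1.2, c.2) d | c <- cuts p, d <- acc])
        [:: ([::], [::])] w.

(* cuts entering Delta_prec: tuples of cuts with 1 in L (1 = first element
   of the first factor) *)
Definition mcuts (w : seq ncp) : seq (seq ncp * seq ncp) :=
  match w with
  | [::] => [::]
  | p :: w' => [seq combine (c.1.2, c.2) d |
                  c <- [seq c <- cuts p | c.1.1], d <- allcuts w']
  end.

Section Funct.
Variable R : comNzRingType.

(* elements of H^* are given by their values on the basis of multipartitions *)
Definition hshuffle (f g : seq ncp -> R) (w : seq ncp) : R :=
  (\sum_(c <- mcuts w) f c.1 * g c.2)%R.

Definition eps (w : seq ncp) : R := ((w == [::]) %:R)%R.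

Definition is_exp (f phi : seq ncp -> R) : Prop :=
  forall w, validw w -> phi w = (eps w + hshuffle f phi w)%R.

Definition Jn n : {set {set 'I_n}} := [set [set i] | i : 'I_n].

Definition kappa (k : nat -> R) (w : seq ncp) : R :=
  match w with
  | [:: p] => let: existT n P := p in if P == Jn n then k n else 0%R
  | _ => 0%R
  end.

Definition einf (w : seq ncp) : R :=
  match w with
  | [:: p] => let: existT n P := p in ((#|P| == 1%N)%:R)%R
  | _ => 0%R
  end.

(* the character K of B: values on generators *)
Definition Kchar (k : nat -> R) (p : ncp) : R := kappa k [:: p].

Definition toH n (P : {set {set 'I_n}}) : seq ncp :=
  if n == 0%N then [::] else [:: mkncp P].

Definition refines n (P Q : {set {set 'I_n}}) : bool :=
  [forall B in P, [exists C in Q, B \subset C]].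

(* (alpha <~ K)(P) = (alpha (x) K) rho(P),
   rho(P) = sum_{Q >= P noncrossing} Q (x) P/Q,  K(P/Q) = prod_tau K(P_|tau) *)
Definition coact (alpha : seq ncp -> R) (K : ncp -> R) n
  (P : {set {set 'I_n}}) : R :=
  (\sum_(Q : {set {set 'I_n}} | isNCP Q && refines P Q)
     alpha (toH Q) * \prod_(tau in Q) K (restr P tau))%R.

End Funct.

(* The solution psi of psi = eps + e ≺ psi is the constant 1: among the lowersets
   containing the point 1, the only one made of a single block is the block of 1.

   The solution phi of phi = eps + kappa ≺ phi is multiplicative, with phi(P) = m_n, the
   n-th free moment sum_{Q in NCP(n)} prod_{pi in Q} k_#pi, when P = J_n, and 0 otherwise.
   For P = J_n the fixed-point equation is the moment-cumulant recursion obtained by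
   splitting a noncrossing partition along the block S of 1: noncrossingness means
   exactly that every other block lies in one gap of S.  For P <> J_n every cut either
   puts a block of size >= 2 into L, so kappa vanishes, or that block lies in one gap of
   L, so the corresponding factor of phi vanishes.  Both solutions are unique because
   the cuts with 1 in L strictly decrease the number of points.

   Finally, with psi = 1 the coaction sum is sum_{Q >= P} K(P/Q), which again vanishes
   unless P = J_n, where every Q refines P and the sum is m_n. *)

From HB Require Import structures.
From mathcomp Require Import all_boot all_algebra.
Set Implicit Arguments. Unset Strict Implicit. Unset Printing Implicit Defensive.
Import GRing.Theory.

Lemma disjoint_memP (T : finType) (A B : {set T}) :
  reflect (forall x, x \in A -> x \notin B) [disjoint A & B].
Proof.
rewrite disjoints_subset; apply: (iffP subsetP) => H x xA; last by rewrite inE H.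
by have := H x xA; rewrite inE.
Qed.

Lemma disjoint_nonempty_sub (T : finType) (C A B : {set T}) :
  C != set0 -> C \subset A -> C \subset B -> ~~ [disjoint A & B].
Proof.
case/set0Pn => x xC CA CB; apply/negP => /disjoint_memP /(_ x (subsetP CA _ xC)).
by rewrite (subsetP CB).
Qed.

Lemma connect_sink (T : finType) (e : rel T) y :
  (forall x, e x y -> x = y) -> forall x, connect e x y -> x = y.
Proof.
move=> sink x /connectP [p]; elim: p x => [|x1 p IH] x /=; first by move=> _ ->.
by case/andP => exx1 pth ly; have e1 := IH _ pth ly; subst x1; apply: sink.
Qed.

Lemma eq_set1_card (T : finType) (A : {set T}) (i : T) :
  i \in A -> (#|A| <= 1)%N -> A = [set i].
Proof.
move=> iA h; have : #|A| == 1 by rewrite eqn_leq h card_gt0; apply/set0Pn; exists i.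
by case/cards1P => x Ax; move: iA; rewrite Ax inE => /eqP ->.
Qed.

Lemma enum_val_ltE n (X : {set 'I_n}) (i j : 'I_#|X|) :
  (enum_val i < enum_val j)%N = (i < j)%N.
Proof.
have mono (a b : 'I_#|X|) : (a < b)%N -> (enum_val a < enum_val b)%N.
  move=> ab; have x0 : 'I_n by case: (enum_val a) => m /ltn_predK <-; exact: ord0.
  have ltT : transitive (relpre (@nat_of_ord n) ltn) by move=> ? ? ? /=; apply: ltn_trans.
  have sorted_X : sorted (relpre val ltn) (enum X).
    rewrite /enum_mem -enumT; apply: sorted_filter => //.
    by rewrite -sorted_map val_enum_ord iota_ltn_sorted.
  rewrite !(enum_val_nth x0).
  by apply: (sorted_ltn_nth (leT := relpre val ltn)); rewrite // inE /= -cardE.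
apply/idP/idP; last exact: mono.
apply: contraTT; rewrite -!leqNgt leq_eqVlt => /orP [/eqP/ord_inj -> //|].
by move/mono/ltnW.
Qed.

Section Noncrossing.
Variable n : nat.
Implicit Types (B C : {set 'I_n}) (P : {set {set 'I_n}}).

Definition nocross B C := forall a b c d : 'I_n,
  a \in B -> b \in B -> c \in C -> d \in C -> (a < c)%N -> (c < b)%N -> (b < d)%N -> False.

Lemma noncrossingP P :
  reflect {in P &, forall B C, B != C -> nocross B C} (noncrossing P).
Proof.
apply: (iffP forall_inP) => [H B C BP CP BC a b c d aB bB cC dC h1 h2 h3|H B BP].
  move: (H B BP) => /forall_inP /(_ C CP) /implyP /(_ BC).
  move=> /forall_inP /(_ a aB) /forall_inP /(_ b bB).
  by move=> /forall_inP /(_ c cC) /forall_inP /(_ d dC); rewrite h1 h2 h3.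
apply/forall_inP => C CP; apply/implyP => BC.
apply/forall_inP => a aB; apply/forall_inP => b bB.
apply/forall_inP => c cC; apply/forall_inP => d dC.
by apply/negP => /and3P [h1 h2 h3]; apply: (H B C BP CP BC a b c d).
Qed.

Lemma nocross_sep B C :
  (forall x y, x \in B -> y \in C -> (x < y)%N) -> nocross B C /\ nocross C B.
Proof.
move=> lt_BC; split => a b c d aB bB cC dC h1 h2 h3.
  by have := lt_BC _ _ bB cC; rewrite ltnNge (ltnW h2).
by have := lt_BC _ _ cC aB; rewrite ltnNge (ltnW h1).
Qed.

End Noncrossing.

Section Gaps.
Variable n : nat.
Implicit Types (S : {set 'I_n}).

Definition nbelow S (y : 'I_n) := #|[set x in S | (x < y)%N]|.

Lemma in_gap S i y : (y \in gap S i) = (y \notin S) && (nbelow S y == i).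
Proof. by rewrite inE. Qed.

Lemma mem_gap_nbelow S y : y \notin S -> y \in gap S (nbelow S y).
Proof. by move=> yS; rewrite in_gap yS eqxx. Qed.

Lemma nbelow_mono S (y y' : 'I_n) : (y <= y')%N -> (nbelow S y <= nbelow S y')%N.
Proof.
move=> le_yy'; apply: subset_leq_card; apply/subsetP => x.
by rewrite !inE => /andP [-> /= xy]; apply: leq_trans le_yy'.
Qed.

Lemma nbelow_le_card S y : (nbelow S y <= #|S|)%N.
Proof. by apply: subset_leq_card; apply/subsetP => x; rewrite inE => /andP []. Qed.

Lemma gap_lt S i j y y' : y \in gap S i -> y' \in gap S j -> (i < j)%N -> (y < y')%N.
Proof.
rewrite !in_gap => /andP [_ /eqP <-] /andP [_ /eqP <-].
by apply: contraTT; rewrite -!leqNgt; apply: nbelow_mono.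
Qed.

Lemma gap_no_between S i y y' x :
  y \in gap S i -> y' \in gap S i -> x \in S -> (y < x)%N -> (x < y')%N -> False.
Proof.
rewrite !in_gap => /andP [_ /eqP ny] /andP [_ /eqP ny'] xS yx xy'.
suff : (nbelow S y < nbelow S y')%N by rewrite ny ny' ltnn.
apply: proper_card; apply/properP; split.
  apply/subsetP => u; rewrite !inE => /andP [-> /=] uy.
  by apply: ltn_trans uy (ltn_trans yx xy').
by exists x; rewrite !inE ?xS //= -leqNgt ltnW.
Qed.

Lemma gap_between S i j y y' : y \in gap S i -> y' \in gap S j -> (i < j)%N ->
  exists2 x, x \in S & (y < x)%N && (x < y').
Proof.
move=> yi y'j ij.
have : ~~ ([set x in S | (x < y')%N] \subset [set x in S | (x < y)%N]).
  apply/negP => /subset_leq_card; move: yi y'j.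
  by rewrite !in_gap /nbelow => /andP [_ /eqP ->] /andP [_ /eqP ->]; rewrite leqNgt ij.
case/subsetPn => x; rewrite !inE => /andP [xS xy'] /nandP [/negP //|].
rewrite -leqNgt leq_eqVlt => /orP [/eqP/ord_inj eyx|yx]; last by exists x; rewrite ?yx.
by move: yi; rewrite in_gap eyx xS.
Qed.

Lemma sub_gap S C : C != set0 -> C \subset ~: S ->
  (forall y y' x, y \in C -> y' \in C -> x \in S -> (y < x)%N -> (x < y')%N -> False) ->
  exists2 i, (i <= #|S|)%N & C \subset gap S i.
Proof.
move=> /set0Pn [y yC] CS no_between.
have outS u : u \in C -> u \notin S by move=> /(subsetP CS); rewrite inE.
have sep v v' : v \in C -> v' \in C -> ~~ (nbelow S v < nbelow S v')%N.
  move=> vC v'C; apply/negP => lt_vv'.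
  have [x xS /andP [vx xv']] :=
    gap_between (mem_gap_nbelow (outS _ vC)) (mem_gap_nbelow (outS _ v'C)) lt_vv'.
  exact: no_between vC v'C xS vx xv'.
exists (nbelow S y); first exact: nbelow_le_card.
apply/subsetP => y' y'C; rewrite in_gap (outS _ y'C) andTb eqn_leq.
by rewrite leqNgt (sep _ _ yC y'C) leqNgt (sep _ _ y'C yC).
Qed.

End Gaps.

Lemma ord0_lt n (z y : 'I_n) : val z = 0 -> y != z -> (z < y)%N.
Proof.
by move=> z0 yz; rewrite z0 lt0n; apply: contra yz => /eqP y0; apply/eqP/ord_inj; rewrite y0 z0.
Qed.

Section Restriction.
Variable n : nat.
Implicit Types (X B : {set 'I_n}) (P L : {set {set 'I_n}}).

Definition trace X B : {set 'I_#|X|} := [set j : 'I_#|X| | enum_val j \in B].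

Lemma enum_val_trace X B : [set enum_val j | j in trace X B] = B :&: X.
Proof.
apply/setP => x; apply/imsetP/idP.
  by case=> j; rewrite inE => jB ->; rewrite inE jB enum_valP.
rewrite inE => /andP [xB xX]; exists (enum_rank_in xX x); last by rewrite enum_rankK_in.
by rewrite inE enum_rankK_in.
Qed.

Lemma card_trace X B : #|trace X B| = #|B :&: X|.
Proof. by rewrite -enum_val_trace card_imset //; apply: enum_val_inj. Qed.

Lemma restrictP P X A :
  A \in restrict P X -> A != set0 /\ exists2 B, B \in P & A = trace X B.
Proof. by rewrite in_setD1 => /andP [A0 /imsetP [B BP eA]]; split => //; exists B. Qed.

Lemma trace_restrict P X B : B \in P -> trace X B != set0 -> trace X B \in restrict P X.
Proof. by move=> BP B0; rewrite in_setD1 B0 imset_f. Qed.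

Lemma restrict_partition P D X :
  partition P D -> X \subset D -> partition (restrict P X) [set: 'I_#|X|].
Proof.
move=> pP XD; apply/and3P; split.
- apply/eqP/setP => j; rewrite inE; apply/bigcupP.
  have : enum_val j \in cover P by rewrite (cover_partition pP) (subsetP XD) ?enum_valP.
  case/bigcupP => B BP jB; exists (trace X B); last by rewrite inE.
  by apply: trace_restrict BP _; apply/set0Pn; exists j; rewrite inE.
- apply/trivIsetP => A A' /restrictP [_ [B BP ->]] /restrictP [_ [B' BP' ->]] ne.
  have /disjoint_memP dBB' : [disjoint B & B'].
    by apply: (trivIsetP (partition_trivIset pP)) => //; apply: contraNneq ne => ->.
  by apply/disjoint_memP => j; rewrite !inE => /dBB'.
- by rewrite setD11.
Qed.

Lemma restrict_noncrossing P X : noncrossing P -> noncrossing (restrict P X).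
Proof.
move/noncrossingP => ncP; apply/noncrossingP.
move=> A A' /restrictP [_ [B BP ->]] /restrictP [_ [B' BP' ->]] ne a b c d.
have BB' : B != B' by apply: contraNneq ne => ->.
rewrite !inE -!enum_val_ltE => aB bB cB' dB'; exact: ncP BB' _ _ _ _ aB bB cB' dB'.
Qed.

Lemma restrict_isNCP P D X :
  partition P D -> noncrossing P -> X \subset D -> isNCP (restrict P X).
Proof.
by move=> pP ncP XD; rewrite /isNCP (restrict_partition pP XD) restrict_noncrossing.
Qed.

Lemma restrict_cover P D L : partition P D -> L \subset P ->
  restrict P (cover L) = [set trace (cover L) B | B in L].
Proof.
move=> pP LP; apply/setP => A; apply/idP/imsetP.
  case/restrictP => A0 [B BP eA]; exists B => //.
  move: A0; rewrite eA -card_gt0 card_trace card_gt0 => /set0Pn [x].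
  rewrite inE => /andP [xB /bigcupP [B' B'L xB']].
  have tP := partition_trivIset pP.
  by rewrite -(def_pblock tP BP xB) (def_pblock tP (subsetP LP _ B'L) xB').
case=> B BL ->; apply: trace_restrict; first exact: subsetP LP _ BL.
rewrite -card_gt0 card_trace card_gt0.
case/set0Pn: (partition_neq0 pP (subsetP LP _ BL)) => x xB.
by apply/set0Pn; exists x; rewrite inE xB; apply/bigcupP; exists B.
Qed.

Lemma card_restrict_cover P D L : partition P D -> L \subset P ->
  #|restrict P (cover L)| = #|L|.
Proof.
move=> pP LP; rewrite (restrict_cover pP LP) card_in_imset // => B B' BL B'L eB.
have BLE E : E \in L -> E :&: cover L = E.
  by move=> EL; apply/setIidPl/subsetP => x xE; apply/bigcupP; exists E.
by rewrite -(BLE _ BL) -(BLE _ B'L) -!enum_val_trace eB.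
Qed.

End Restriction.

Lemma Jn_partition m : partition (Jn m) [set: 'I_m].
Proof.
apply/and3P; split.
- apply/eqP/setP => i; rewrite inE; apply/bigcupP; exists [set i]; rewrite ?set11 //.
  exact: imset_f.
- apply/trivIsetP => _ _ /imsetP [i _ ->] /imsetP [j _ ->] ij.
  by rewrite disjoints1 inE; apply: contraNneq ij => ->.
- by apply/imsetP => [[i _ /setP/(_ i)]]; rewrite !inE eqxx.
Qed.

Lemma eqJ_partition m (Q : {set {set 'I_m}}) : partition Q [set: 'I_m] ->
  (Q == Jn m) = [forall C in Q, #|C| <= 1]%N.
Proof.
move=> pQ; apply/eqP/forall_inP => [-> C /imsetP [i _ ->]|small]; first by rewrite cards1.
apply/setP => C; apply/idP/imsetP => [CQ|[i _ ->]].
  case/set0Pn: (partition_neq0 pQ CQ) => x xC; exists x => //.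
  exact: eq_set1_card (small _ CQ).
have iQ : i \in cover Q by rewrite (cover_partition pQ) inE.
by rewrite -(eq_set1_card _ (small _ (pblock_mem iQ))) ?pblock_mem // mem_pblock.
Qed.

Lemma eqJ_card m (Q : {set {set 'I_m}}) : partition Q [set: 'I_m] ->
  (Q == Jn m) = (#|Q| == m).
Proof.
move=> pQ; rewrite (eqJ_partition pQ).
have sizes : \sum_(C in Q) #|C| = m by rewrite -(card_partition pQ) cardsT card_ord.
have pos C : C \in Q -> (0 < #|C|)%N by move=> CQ; rewrite card_gt0 (partition_neq0 pQ).
apply/forall_inP/eqP => [small|cardQ C CQ].
  rewrite -[RHS]sizes -sum1_card; apply: eq_bigr => C CQ.
  by apply/eqP; rewrite eqn_leq small ?pos.
have {}sizes : \sum_(E in Q) #|E| = \sum_(E in Q) 1 by rewrite sum1_card cardQ.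
rewrite leqNgt; apply/negP => C2; move: sizes.
rewrite (bigD1 C) //= [in RHS](bigD1 C) //= => /eqP; rewrite eqn_leq => /andP [+ _].
rewrite leqNgt => /negP; apply; rewrite -addSn; apply: leq_add C2 _.
by apply: leq_sum => E /andP [EQ _]; apply: pos.
Qed.

Lemma restrict_eqJ n (P : {set {set 'I_n}}) D (X : {set 'I_n}) :
  partition P D -> X \subset D ->
  (restrict P X == Jn #|X|) = [forall B in P, #|B :&: X| <= 1]%N.
Proof.
move=> pP XD; rewrite eqJ_partition ?(restrict_partition pP XD) //.
apply/forall_inP/forall_inP => [small B BP|small A /restrictP [_ [B BP ->]]].
  rewrite -card_trace; have [->|B0] := eqVneq (trace X B) set0; first by rewrite cards0.
  exact: small (trace_restrict BP B0).
by rewrite card_trace small.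
Qed.

Lemma restrict_Jn n (X : {set 'I_n}) : restrict (Jn n) X == Jn #|X|.
Proof.
rewrite (restrict_eqJ (Jn_partition n) (subsetT _)); apply/forall_inP => _ /imsetP [i _ ->].
by rewrite (leq_trans (subset_leq_card (subsetIl _ _))) ?cards1.
Qed.

Lemma restrict_neqJ n (P : {set {set 'I_n}}) (X B : {set 'I_n}) :
  partition P [set: 'I_n] -> B \in P -> (1 < #|B|)%N -> B \subset X ->
  (restrict P X == Jn #|X|) = false.
Proof.
move=> pP BP B2 BX; rewrite (restrict_eqJ pP (subsetT _)); apply/negbTE/forall_inP.
by move/(_ B BP); rewrite (setIidPl BX) leqNgt B2.
Qed.

Section Lowersets.
Variable n : nat.
Implicit Types (B : {set 'I_n}) (P L : {set {set 'I_n}}).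

Lemma mem_conv B a b (x : 'I_n) :
  a \in B -> b \in B -> (a <= x)%N -> (x <= b)%N -> x \in conv B.
Proof.
move=> aB bB ax xb; rewrite inE; apply/existsP; exists a; rewrite aB /=.
by apply/existsP; exists b; rewrite bB ax xb.
Qed.

Lemma convP B (x : 'I_n) :
  reflect (exists a b, [/\ a \in B, b \in B, (a <= x)%N & (x <= b)%N]) (x \in conv B).
Proof.
apply: (iffP idP) => [|[a [b [aB bB ax xb]]]]; last exact: mem_conv aB bB ax xb.
rewrite inE => /existsP [a /andP [aB /existsP [b /andP [bB /andP [ax xb]]]]].
by exists a, b.
Qed.

Lemma lowersetP P L :
  reflect (L \subset P /\ {in L & P, forall pi sigma, arrow P sigma pi -> sigma \in L})
          (lowerset P L).
Proof.
apply: (iffP andP) => [[LP /forall_inP low]|[LP low]]; split => //.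
  by move=> pi sigma piL sP; move: (low pi piL) => /forall_inP /(_ sigma sP) /implyP.
by apply/forall_inP => pi piL; apply/forall_inP => s sP; apply/implyP; apply: low.
Qed.

Lemma lowerset0 P : lowerset P set0.
Proof. by apply/lowersetP; split => [|pi]; rewrite ?sub0set ?inE. Qed.

Lemma lowerset_first_block P (z : 'I_n) :
  partition P [set: 'I_n] -> noncrossing P -> val z = 0 -> lowerset P [set pblock P z].
Proof.
move=> pP /noncrossingP ncP z0.
have zP : z \in cover P by rewrite (cover_partition pP) inE.
set B0 := pblock P z; have B0P : B0 \in P := pblock_mem zP.
have tP := partition_trivIset pP.
apply/lowersetP; split => [|pi s]; first by rewrite sub1set.
rewrite inE => /eqP -> sP ar; rewrite inE; apply/eqP; apply: (connect_sink _ ar) => x.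
case/and3P => xP _ meet; apply/eqP; apply: contraNT meet => xB0.
have notB0 y : y \in x -> y \notin B0.
  by move=> yx; apply: contra xB0 => yB0; rewrite -(def_pblock tP xP yx) (def_pblock tP B0P yB0).
have zB0 : z \in B0 by rewrite mem_pblock.
have neq y v : y \in x -> v \in B0 -> y != v.
  by move=> yx vB0; apply: contraTneq vB0 => <-; apply: notB0.
apply/disjoint_memP => u /convP [a [b [ax bx au ub]]]; apply/negP => uB0.
have za : (z < a)%N by rewrite (ord0_lt z0) // (neq _ _ ax zB0).
have au' : (a < u)%N by rewrite ltn_neqAle au andbT (neq _ _ ax uB0).
have ub' : (u < b)%N by rewrite ltn_neqAle ub andbT eq_sym (neq _ _ bx uB0).
by apply: (ncP B0 x B0P xP _ z u a b zB0 uB0 ax bx za au' ub'); rewrite eq_sym.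
Qed.

Lemma block_sub_gap P L B : partition P [set: 'I_n] -> lowerset P L ->
  B \in P -> B \notin L -> exists2 i, (i <= #|cover L|)%N & B \subset gap (cover L) i.
Proof.
move=> pP /lowersetP [LP low] BP BL; apply: sub_gap (partition_neq0 pP BP) _ _.
  apply/subsetP => x xB; rewrite inE; apply/negP => /bigcupP [pi piL xpi]; apply: (negP BL).
  have tP := partition_trivIset pP.
  by rewrite -(def_pblock tP BP xB) (def_pblock tP (subsetP LP _ piL) xpi).
move=> y y' x yB y'B /bigcupP [pi piL xpi] yx xy'; apply: (negP BL).
apply: (low pi B piL BP); apply: connect1; rewrite /arrow0 BP (subsetP LP _ piL) /=.
apply/negP => /disjoint_memP/(_ x (mem_conv yB y'B (ltnW yx) (ltnW xy'))).
by rewrite xpi.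
Qed.

Lemma lowerset_Jn L : L \subset Jn n -> lowerset (Jn n) L.
Proof.
move=> LJ; apply/lowersetP; split => // pi s piL sJ ar; suff -> : s = pi by [].
apply: (connect_sink _ ar) => x /and3P [/imsetP [a _ ->] /imsetP [b _ ->]].
apply: contraNeq => ab; apply/disjoint_memP => v /convP [a' [b' []]].
rewrite !inE => /eqP -> /eqP -> av va.
have -> : v = a by apply/ord_inj/eqP; rewrite eqn_leq av va.
by apply: contra ab => /eqP ->.
Qed.

End Lowersets.

Section Singletons.
Variable n : nat.
Implicit Types (S : {set 'I_n}) (L : {set {set 'I_n}}).

Definition singletons S : {set {set 'I_n}} := [set [set i] | i in S].

Lemma cover_singletons S : cover (singletons S) = S.
Proof.
apply/setP => x; apply/bigcupP/idP => [[_ /imsetP [i iS ->]]|xS]; first by rewrite inE => /eqP ->.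
by exists [set x]; rewrite ?set11 ?imset_f.
Qed.

Lemma singletons_cover L : L \subset Jn n -> singletons (cover L) = L.
Proof.
move=> LJ; apply/setP => C; apply/imsetP/idP => [[i /bigcupP [B BL iB] ->]|CL].
  by have /imsetP [j _ eB] := subsetP LJ _ BL; move: iB; rewrite eB inE => /eqP ->; rewrite -eB.
have /imsetP [j _ eC] := subsetP LJ _ CL.
by exists j => //; apply/bigcupP; exists C; rewrite // eC set11.
Qed.

Lemma singletons_sub_Jn S : singletons S \subset Jn n.
Proof. by apply/subsetP => _ /imsetP [i _ ->]; apply: imset_f. Qed.

End Singletons.

Section NCPartitions.
Variable n : nat.
Implicit Types (X A B C : {set 'I_n}) (Q : {set {set 'I_n}}).

Definition ncpartition Q X := partition Q X && noncrossing Q.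

Definition blocks_in Q A := [set C in Q | C \subset A].

Lemma ncpartition1 X : X != set0 -> ncpartition [set X] X.
Proof.
move=> X0; rewrite /ncpartition /partition cover1 eqxx trivIset1 inE eq_sym X0 /=.
by apply/noncrossingP => C C'; rewrite !inE => /eqP -> /eqP ->; rewrite eqxx.
Qed.

Lemma ncpartitionU A B Q1 Q2 :
  ncpartition Q1 A -> ncpartition Q2 B -> [disjoint A & B] ->
  {in Q1 & Q2, forall C1 C2, nocross C1 C2 /\ nocross C2 C1} ->
  ncpartition (Q1 :|: Q2) (A :|: B).
Proof.
case/andP => p1 /noncrossingP n1 /andP [p2 /noncrossingP n2] dAB X12.
have apart C1 C2 : C1 \in Q1 -> C2 \in Q2 -> [disjoint C1 & C2].
  by move=> C1Q C2Q; apply: disjointW (partitionS p1 C1Q) (partitionS p2 C2Q) dAB.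
apply/andP; split; [apply/and3P; split|].
- by rewrite /cover bigcup_setU -!/(cover _) (cover_partition p1) (cover_partition p2).
- apply/trivIsetP => C C'; rewrite !inE => /orP [h|h] /orP [h'|h'] ne.
  + exact: (trivIsetP (partition_trivIset p1)).
  + exact: apart.
  + by rewrite disjoint_sym apart.
  + exact: (trivIsetP (partition_trivIset p2)).
- by rewrite !inE (partition0 p1) (partition0 p2).
apply/noncrossingP => C C'; rewrite !inE => /orP [h|h] /orP [h'|h'] ne.
- exact: n1.
- by case: (X12 _ _ h h').
- by case: (X12 _ _ h' h).
- exact: n2.
Qed.

Lemma ncpartition_blocks_in X Q A : ncpartition Q X ->
  (forall C, C \in Q -> C \subset A \/ [disjoint C & A]) -> A \subset X ->
  ncpartition (blocks_in Q A) A.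
Proof.
case/andP => pQ /noncrossingP nQ inout AX; apply/andP; split; [apply/and3P; split|].
- apply/eqP/setP => x; apply/bigcupP/idP => [[C]|xA].
    by rewrite inE => /andP [_ CA] xC; apply: (subsetP CA).
  have : x \in cover Q by rewrite (cover_partition pQ) (subsetP AX).
  case/bigcupP => C CQ xC; exists C => //; rewrite inE CQ /=.
  by case: (inout C CQ) => // /disjoint_memP/(_ x xC); rewrite xA.
- by apply: trivIsetS (partition_trivIset pQ); apply/subsetP => C; rewrite inE => /andP [].
- by rewrite inE (partition0 pQ).
apply/noncrossingP => C C'; rewrite !inE => /andP [CQ _] /andP [C'Q _]; exact: nQ.
Qed.

Lemma ncpartition_split A B Q : ncpartition Q (A :|: B) -> [disjoint A & B] ->
  (forall C, C \in Q -> C \subset A \/ C \subset B) ->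
  [/\ ncpartition (blocks_in Q A) A, ncpartition (blocks_in Q B) B
    & blocks_in Q A :|: blocks_in Q B = Q].
Proof.
move=> ncQ dAB AorB; have pQ : partition Q (A :|: B) by case/andP: ncQ.
have dCA C : C \subset B -> [disjoint C & A].
  by move=> CB; rewrite disjoint_sym; apply: disjointWr CB dAB.
have dCB C : C \subset A -> [disjoint C & B] by move=> CA; apply: disjointWl CA dAB.
split.
- apply: ncpartition_blocks_in ncQ _ (subsetUl _ _) => C /AorB [CA|/dCA]; by [left|right].
- apply: ncpartition_blocks_in ncQ _ (subsetUr _ _) => C /AorB [/dCB|CB]; by [right|left].
apply/setP => C; rewrite !inE -andb_orr.
by case CQ: (C \in Q) => //=; case: (AorB C CQ) => ->; rewrite ?orbT.
Qed.

Lemma blocks_inU A B Q1 Q2 : partition Q1 A -> partition Q2 B -> [disjoint A & B] ->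
  [/\ blocks_in (Q1 :|: Q2) A = Q1, blocks_in (Q1 :|: Q2) B = Q2 & [disjoint Q1 & Q2]].
Proof.
have nsub X (Y : {set 'I_n}) Q C :
    partition Q X -> [disjoint X & Y] -> C \in Q -> ~~ (C \subset Y).
  move=> pQ dXY CQ; have Q0 := partition_neq0 pQ CQ.
  by apply/negP => /(disjoint_nonempty_sub Q0 (partitionS pQ CQ)); rewrite dXY.
have only X (Y : {set 'I_n}) (Qx Qy : {set {set 'I_n}}) :
    partition Qx X -> partition Qy Y -> [disjoint Y & X] -> blocks_in (Qx :|: Qy) X = Qx.
  move=> pX pY dYX; apply/setP => C; rewrite !inE andb_orl.
  case CQx: (C \in Qx); first by rewrite (partitionS pX CQx).
  by case CQy: (C \in Qy); rewrite ?andbF // (negbTE (nsub _ _ _ _ pY dYX CQy)).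
move=> p1 p2 dAB; split; first by apply: only p1 p2 _; rewrite disjoint_sym.
  by rewrite setUC; apply: only p2 p1 dAB.
by apply/disjoint_memP => C CQ1; apply: contra (nsub _ _ _ _ p1 dAB CQ1) => /(partitionS p2).
Qed.

End NCPartitions.

Section Transport.
Variables (n : nat) (X : {set 'I_n}).

Definition embed (C : {set 'I_#|X|}) : {set 'I_n} := [set enum_val j | j in C].

Definition expand (Q : {set {set 'I_#|X|}}) : {set {set 'I_n}} := [set embed C | C in Q].

Lemma trace_embed (C : {set 'I_#|X|}) : trace X (embed C) = C.
Proof. by apply/setP => j; rewrite inE mem_imset //; apply: enum_val_inj. Qed.

Lemma restrict_expand (Q : {set {set 'I_#|X|}}) : set0 \notin Q -> restrict (expand Q) X = Q.
Proof.
move=> Q0; apply/setP => C; apply/idP/idP.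
  by case/restrictP => _ [B /imsetP [C' C'Q ->] ->]; rewrite trace_embed.
move=> CQ; have C0 : C != set0 by apply: contraNneq Q0 => <-.
by rewrite -(trace_embed C); apply: trace_restrict; rewrite ?imset_f ?trace_embed.
Qed.

Lemma expand_restrict (Q : {set {set 'I_n}}) : partition Q X -> expand (restrict Q X) = Q.
Proof.
move=> pQ; have BX B : B \in Q -> B :&: X = B by move/(partitionS pQ)/setIidPl.
apply/setP => B; apply/imsetP/idP => [[C /restrictP [_ [B' B'Q ->]] ->]|BQ].
  by rewrite /embed enum_val_trace BX.
exists (trace X B); last by rewrite /embed enum_val_trace BX.
apply: trace_restrict => //; rewrite -card_gt0 card_trace BX // card_gt0.
exact: partition_neq0 pQ BQ.
Qed.

Lemma expand_ncpartition (Q : {set {set 'I_#|X|}}) : isNCP Q -> ncpartition (expand Q) X.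
Proof.
case/andP => pQ /noncrossingP ncQ.
apply/andP; split.
  have im : [set enum_val j | j in [set: 'I_#|X|]] = X.
    apply/setP => x; apply/imsetP/idP => [[j _ ->]|xX]; first exact: enum_valP.
    by exists (enum_rank_in xX x); rewrite ?enum_rankK_in.
  by rewrite -[X in partition _ X]im imset_partition //; apply: enum_val_inj.
apply/noncrossingP => B B' /imsetP [C CQ ->] /imsetP [C' C'Q ->] ne.
have CC' : C != C' by apply: contraNneq ne => ->.
move=> a b c d /imsetP [a' aC ->] /imsetP [b' bC ->] /imsetP [c' cC ->] /imsetP [d' dC ->].
rewrite !enum_val_ltE; exact: ncQ CC' _ _ _ _ aC bC cC dC.
Qed.

End Transport.

Section GapDecomposition.
Variable n : nat.
Implicit Types (S C : {set 'I_n}) (Q : {set {set 'I_n}}).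

Definition below_gaps S m := [set y | (y \notin S) && (nbelow S y < m)%N].

Definition in_gaps S m Q := [forall C in Q, [exists i : 'I_m, C \subset gap S i]].

Lemma in_gapsP S m Q :
  reflect (forall C, C \in Q -> exists2 i, (i < m)%N & C \subset gap S i) (in_gaps S m Q).
Proof.
apply: (iffP forall_inP) => [H C /H /existsP [i Ci]|H C /H [i im Ci]]; first by exists i.
by apply/existsP; exists (Ordinal im).
Qed.

Lemma below_gaps0 S : below_gaps S 0 = set0.
Proof. by apply/setP => y; rewrite !inE ltn0 andbF. Qed.

Lemma below_gapsS S m : below_gaps S m.+1 = below_gaps S m :|: gap S m.
Proof. by apply/setP => y; rewrite !inE ltnS leq_eqVlt; case: (y \in S); rewrite //= orbC. Qed.

Lemma below_gaps_all S : below_gaps S #|S|.+1 = ~: S.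
Proof. by apply/setP => y; rewrite !inE ltnS nbelow_le_card andbT. Qed.

Lemma gap_sub_below S i m : (i < m)%N -> gap S i \subset below_gaps S m.
Proof. by move=> im; apply/subsetP => y; rewrite in_gap inE => /andP [-> /eqP ->]. Qed.

Lemma disjoint_below_gap S m : [disjoint below_gaps S m & gap S m].
Proof.
apply/disjoint_memP => y; rewrite inE in_gap => /andP [_ ym].
by rewrite negb_and (ltn_eqF ym) orbT.
Qed.

Lemma in_gaps_split S m Q :
  ncpartition Q (below_gaps S m.+1) -> in_gaps S m.+1 Q ->
  [/\ ncpartition (blocks_in Q (below_gaps S m)) (below_gaps S m)
        && in_gaps S m (blocks_in Q (below_gaps S m)),
      ncpartition (blocks_in Q (gap S m)) (gap S m)
    & blocks_in Q (below_gaps S m) :|: blocks_in Q (gap S m) = Q].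
Proof.
rewrite below_gapsS => ncQ /in_gapsP inQ; have pQ : partition Q _ := proj1 (andP ncQ).
have [|nc1 nc2 QE] := ncpartition_split ncQ (disjoint_below_gap S m).
  move=> C /inQ [i]; rewrite ltnS leq_eqVlt => /orP [/eqP -> |im] Ci; first by right.
  by left; apply: subset_trans Ci (gap_sub_below _ im).
split=> //; rewrite nc1; apply/in_gapsP => C; rewrite inE => /andP [CQ Cb].
have [i] := inQ C CQ; rewrite ltnS leq_eqVlt => /orP [/eqP eim|]; last by exists i.
rewrite eim => Cm; have := disjoint_nonempty_sub (partition_neq0 pQ CQ) Cb Cm.
by rewrite disjoint_below_gap.
Qed.

Lemma in_gaps_glue S m Q1 Q2 :
  ncpartition Q1 (below_gaps S m) -> in_gaps S m Q1 -> ncpartition Q2 (gap S m) ->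
  ncpartition (Q1 :|: Q2) (below_gaps S m.+1) && in_gaps S m.+1 (Q1 :|: Q2).
Proof.
move=> nc1 /in_gapsP in1 nc2; have p2 : partition Q2 _ := proj1 (andP nc2).
rewrite below_gapsS (ncpartitionU nc1 nc2 (disjoint_below_gap S m)) /=.
  apply/in_gapsP => C; rewrite inE => /orP [/in1 [i im Ci]|CQ2].
    by exists i => //; apply: ltnW.
  by exists m => //; apply: partitionS p2 CQ2.
move=> C1 C2 /in1 [i im Ci] C2Q; apply: nocross_sep => x y xC1 yC2.
exact: gap_lt (subsetP Ci _ xC1) (subsetP (partitionS p2 C2Q) _ yC2) im.
Qed.

Lemma first_block_split (z : 'I_n) S Q : val z = 0 ->
  ncpartition Q [set: 'I_n] -> pblock Q z = S ->
  [/\ blocks_in Q S == [set S],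
      ncpartition (blocks_in Q (~: S)) (~: S) && in_gaps S #|S|.+1 (blocks_in Q (~: S))
    & blocks_in Q S :|: blocks_in Q (~: S) = Q].
Proof.
move=> z0 ncQ QS; have /andP [pQ /noncrossingP ncrQ] := ncQ.
have zQ : z \in cover Q by rewrite (cover_partition pQ) inE.
have SQ : S \in Q by rewrite -QS pblock_mem.
have zS : z \in S by rewrite -QS mem_pblock.
have other C : C \in Q -> C != S -> C \subset ~: S.
  by move=> CQ CS; rewrite -disjoints_subset (trivIsetP (partition_trivIset pQ)).
have dS : [disjoint S & ~: S] by rewrite disjoints_subset setCK.
have ncQ' : ncpartition Q (S :|: ~: S) by rewrite setUCr.
have [|nc1 nc2 QE] := ncpartition_split ncQ' dS.
  by move=> C CQ; have [->|/(other _ CQ)] := eqVneq C S; [left|right].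
split => //.
  apply/eqP/setP => C; rewrite !inE; apply/andP/eqP => [[CQ CS]|->]; last by rewrite SQ.
  apply/eqP; apply: contraTT CS => /(other _ CQ) CnS; apply/negP => CS.
  have := disjoint_nonempty_sub (partition_neq0 pQ CQ) CS CnS.
  by rewrite dS.
rewrite nc2; apply/in_gapsP => C; rewrite inE => /andP [CQ CnS].
have CS : S != C.
  by apply: contraTneq CnS => <-; apply/negP => /subsetP/(_ z zS); rewrite inE zS.
have [y y' x yC y'C xS yx xy'|i ile Ci] := sub_gap (partition_neq0 pQ CQ) CnS; last first.
  by exists i; rewrite ?ltnS.
have zy : (z < y)%N.
  by apply: ord0_lt z0 _; apply: contraTneq yC => ->; apply/negP => /(subsetP CnS); rewrite inE zS.
exact: ncrQ _ _ SQ CQ CS z x y y' zS xS yC y'C zy yx xy'.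
Qed.

Lemma first_block_glue (z : 'I_n) S Q : z \in S ->
  ncpartition Q (~: S) -> in_gaps S #|S|.+1 Q ->
  ncpartition ([set S] :|: Q) [set: 'I_n] && (pblock ([set S] :|: Q) z == S).
Proof.
move=> zS ncQ /in_gapsP inQ.
have S0 : S != set0 by apply/set0Pn; exists z.
have ncU : ncpartition ([set S] :|: Q) [set: 'I_n].
  rewrite -(setUCr S); apply: ncpartitionU (ncpartition1 S0) ncQ _ _.
    by rewrite disjoints_subset setCK.
  move=> C1 C2; rewrite inE => /eqP -> /inQ [i _ Ci]; split.
    move=> a b c d _ bS cC dC _ cb bd.
    exact: gap_no_between (subsetP Ci _ cC) (subsetP Ci _ dC) bS cb bd.
  move=> a b c d aC bC cS _ ac cb _.
  exact: gap_no_between (subsetP Ci _ aC) (subsetP Ci _ bC) cS ac cb.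
rewrite ncU; apply/eqP/def_pblock => //; last by rewrite !inE eqxx.
by case/andP: ncU => /partition_trivIset.
Qed.

End GapDecomposition.

Section Moments.
Variable R : comNzRingType.
Variable k : nat -> R.
Local Open Scope ring_scope.

Definition weight n (Q : {set {set 'I_n}}) : R := \prod_(pi in Q) k #|pi|.

Definition momentX n (X : {set 'I_n}) : R := \sum_(Q | ncpartition Q X) weight Q.

Definition moment m : R := \sum_(Q : {set {set 'I_m}} | isNCP Q) weight Q.

Lemma weightU n (Q1 Q2 : {set {set 'I_n}}) :
  [disjoint Q1 & Q2] -> weight (Q1 :|: Q2) = weight Q1 * weight Q2.
Proof.
by move=> dQ; rewrite /weight (eq_bigl [predU Q1 & Q2]) ?bigU // => C; rewrite !inE.
Qed.

Lemma sum_factor_bij (I : finType) (p p1 p2 : pred I) (u : I -> I -> I) (s1 s2 : I -> I)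
    (F : I -> R) :
  (forall Q, p Q -> [/\ p1 (s1 Q), p2 (s2 Q) & u (s1 Q) (s2 Q) = Q]) ->
  (forall Q1 Q2, p1 Q1 -> p2 Q2 ->
     [/\ p (u Q1 Q2), s1 (u Q1 Q2) = Q1, s2 (u Q1 Q2) = Q2 & F (u Q1 Q2) = F Q1 * F Q2]) ->
  \sum_(Q | p Q) F Q = (\sum_(Q1 | p1 Q1) F Q1) * (\sum_(Q2 | p2 Q2) F Q2).
Proof.
move=> split glue; rewrite big_distrlr pair_big /=.
rewrite (reindex_onto (fun Q12 : I * I => u Q12.1 Q12.2) (fun Q => (s1 Q, s2 Q))); last first.
  by move=> Q /split [].
apply: eq_big => [[Q1 Q2]|[Q1 Q2]] /=.
  apply/andP/andP => [[/split [+ + _] /eqP [e1 e2]]|[p1Q1 p2Q2]].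
    by rewrite e1 e2.
  by case: (glue _ _ p1Q1 p2Q2) => -> -> -> _.
case/andP => /split [+ + _] /eqP [e1 e2]; rewrite e1 e2 => p1Q1 p2Q2.
by case: (glue _ _ p1Q1 p2Q2).
Qed.

Lemma momentX_card n (X : {set 'I_n}) : momentX X = moment #|X|.
Proof.
rewrite /momentX /moment (reindex_onto (@expand n X) (fun Q => restrict Q X)); last first.
  by move=> Q /andP [pQ _]; apply: expand_restrict.
apply: eq_big => [Q|Q _].
  apply/andP/idP => [[/andP [pQ ncQ] /eqP <-]|ncQ].
    exact: restrict_isNCP pQ ncQ (subxx _).
  by rewrite expand_ncpartition // restrict_expand //; case/andP: ncQ => /and3P [].
rewrite /weight /expand big_imset /=; last by move=> C C' _ _; apply/imset_inj/enum_val_inj.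
by apply: eq_bigr => C _; rewrite card_imset //; apply: enum_val_inj.
Qed.

Lemma momentX0 n : momentX (set0 : {set 'I_n}) = 1.
Proof.
rewrite /momentX (eq_bigl (pred1 set0)) ?big_pred1_eq /weight ?big_set0 // => Q /=.
rewrite /ncpartition partition_set0; case: eqP => [->|//] /=.
by apply/noncrossingP => C; rewrite inE.
Qed.

Lemma moment0 : moment 0 = 1.
Proof. by rewrite -(cards0 'I_0) -momentX_card momentX0. Qed.

Lemma momentX_below_gaps n (S : {set 'I_n}) m :
  \sum_(Q | ncpartition Q (below_gaps S m) && in_gaps S m Q) weight Q
  = \prod_(i < m) momentX (gap S i).
Proof.
elim: m => [|m IH].
  rewrite big_ord0 (eq_bigl (pred1 set0)) ?big_pred1_eq /weight ?big_set0 // => Q /=.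
  rewrite below_gaps0 /ncpartition partition_set0 -andbA.
  case: eqP => [-> |//] /=.
  by apply/andP; split; [apply/noncrossingP|apply/in_gapsP] => C; rewrite inE.
rewrite big_ord_recr /= -IH /momentX.
apply: (sum_factor_bij (s1 := fun Q => blocks_in Q (below_gaps S m))
          (s2 := fun Q => blocks_in Q (gap S m))) => [Q /andP [ncQ inQ]|Q1 Q2 /andP [nc1 in1] nc2].
  exact: in_gaps_split.
have [e1 e2 dQ] := blocks_inU (proj1 (andP nc1)) (proj1 (andP nc2)) (disjoint_below_gap S m).
by rewrite in_gaps_glue // e1 e2 weightU.
Qed.

Lemma moment_recursion n (z : 'I_n) : val z = 0 ->
  momentX [set: 'I_n]
  = \sum_(S : {set 'I_n} | z \in S) k #|S| * \prod_(i < #|S|.+1) momentX (gap S i).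
Proof.
move=> z0; rewrite /momentX (partition_big (fun Q => pblock Q z) (fun S => z \in S)); last first.
  by move=> Q /andP [pQ _]; rewrite mem_pblock (cover_partition pQ) inE.
apply: eq_bigr => S zS; rewrite -momentX_below_gaps below_gaps_all.
have -> : k #|S| = \sum_(Q1 | Q1 == [set S]) weight Q1 by rewrite big_pred1_eq /weight big_set1.
apply: (sum_factor_bij (s1 := fun Q => blocks_in Q S) (s2 := fun Q => blocks_in Q (~: S)))
  => [Q /andP [ncQ /eqP QS]|Q1 Q2 /eqP -> /andP [nc2 in2]].
  exact: first_block_split z0 ncQ QS.
have S0 : S != set0 by apply/set0Pn; exists z.
have dS : [disjoint S & ~: S] by rewrite disjoints_subset setCK.
have [e1 e2 dQ] := blocks_inU (proj1 (andP (ncpartition1 S0))) (proj1 (andP nc2)) dS.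
by rewrite first_block_glue // e1 e2 weightU.
Qed.

End Moments.

Definition lowersets n (P : {set {set 'I_n}}) := [seq L <- enum (powerset P) | lowerset P L].

Definition ubar_empty (p : ncp) : seq ncp := let: existT n P := p in ubar P set0.

Definition ubars_empty (w : seq ncp) : seq ncp := flatten (map ubar_empty w).

Definition msize (w : seq ncp) : nat := sumn (map (fun p => tag p) w).

Lemma msize_cat w1 w2 : msize (w1 ++ w2) = (msize w1 + msize w2)%N.
Proof. by rewrite /msize map_cat sumn_cat. Qed.

Lemma cover0 n : cover (set0 : {set {set 'I_n}}) = set0.
Proof. by rewrite /cover big_set0. Qed.

Lemma first_inE n (L : {set {set 'I_n}}) (z : 'I_n) :
  val z = 0 -> first_in L = (z \in cover L).
Proof.
move=> z0; apply/existsP/idP => [[i /andP [iL /eqP i0]]|zL]; last by exists z; rewrite zL z0.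
by have -> : z = i by apply: ord_inj; rewrite z0 i0.
Qed.

Lemma first_in_neq0 n (L : {set {set 'I_n}}) : first_in L -> L != set0.
Proof. by case/existsP => i /andP [iL _]; apply: contraTneq iL => ->; rewrite cover0 inE. Qed.

Lemma gap_set0 n : gap (set0 : {set 'I_n}) 0 = setT.
Proof.
apply/setP => y; rewrite !inE /=; apply/eqP; apply/eqP; rewrite cards_eq0.
by apply/eqP/setP => x; rewrite !inE.
Qed.

Lemma ubar_set0 n (P : {set {set 'I_n}}) : (0 < n)%N -> ubar P set0 = [:: restr P setT].
Proof.
move=> n0; rewrite /ubar cover0 cards0 /= gap_set0.
have -> : (setT : {set 'I_n}) != set0 by apply/set0Pn; exists (Ordinal n0); rewrite inE.
by rewrite /= gap_set0.
Qed.

Lemma ncp_ok_restr n (P : {set {set 'I_n}}) X : isNCP P -> X != set0 -> ncp_ok (restr P X).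
Proof.
case/andP => pP ncP X0; rewrite /ncp_ok /= card_gt0 X0 /=.
exact: restrict_isNCP pP ncP (subsetT _).
Qed.

Lemma ubars_empty_valid w : validw w -> validw (ubars_empty w) /\ msize (ubars_empty w) = msize w.
Proof.
elim: w => [|[n P] w IH] //= /andP [/andP [n0 ncP] /IH [vw sw]].
rewrite /ubars_empty /= -/(ubars_empty w) ubar_set0 //= vw andbT; split.
  by apply: ncp_ok_restr => //; apply/set0Pn; exists (Ordinal n0); rewrite inE.
by rewrite /msize /= -!/(msize _) sw cardsT card_ord.
Qed.

Lemma sum_card_gaps n (S : {set 'I_n}) : (\sum_(i <- iota 0 #|S|.+1) #|gap S i|)%N = #|~: S|.
Proof.
transitivity (\sum_(i <- iota 0 #|S|.+1) \sum_(y : 'I_n) (y \in gap S i : nat))%N.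
  by apply: eq_bigr => i _; rewrite -sum1_card big_mkcond.
rewrite exchange_big -[RHS]sum1_card [RHS]big_mkcond; apply: eq_bigr => y _.
rewrite inE; case yS: (y \in S); rewrite [RHS]/=.
  by rewrite big1 // => i _; rewrite in_gap yS.
rewrite (eq_bigr (fun i => if nbelow S y == i then 1 else 0))%N; last first.
  by move=> i _; rewrite in_gap yS.
rewrite -big_mkcond sum1_count (eq_count (a2 := pred1 (nbelow S y))); last first.
  by move=> i; rewrite /= eq_sym.
by rewrite count_uniq_mem ?iota_uniq // mem_iota add0n ltnS nbelow_le_card.
Qed.

Lemma ubar_valid n (P L : {set {set 'I_n}}) : isNCP P ->
  validw (ubar P L) /\ msize (ubar P L) = #|~: cover L|.
Proof.
move=> ncP; split.
  by apply/allP => q /mapP [i]; rewrite mem_filter => /andP [gi _] ->; apply: ncp_ok_restr.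
rewrite /msize /ubar -map_comp sumnE big_map big_filter -sum_card_gaps.
rewrite [RHS](bigID (fun i => gap (cover L) i != set0)) [X in _ = _ + X]big1 ?addn0 // => i.
by rewrite negbK => /eqP ->; rewrite cards0.
Qed.

Lemma card_setC_lt n (S : {set 'I_n}) z : z \in S -> (#|~: S| < n)%N.
Proof.
move=> zS; have := cardsC S; rewrite card_ord => e.
by rewrite -[X in (_ < X)%N]e -{1}(add0n #|~: S|) ltn_add2r card_gt0; apply/set0Pn; exists z.
Qed.

Section Cuts.
Variable R : comNzRingType.
Local Open Scope ring_scope.

Lemma sum_lowersets n (P : {set {set 'I_n}}) (Q : pred {set {set 'I_n}}) (F : _ -> R) :
  \sum_(L <- lowersets P | Q L) F L = \sum_(L in powerset P | lowerset P L && Q L) F L.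
Proof. by rewrite /lowersets big_filter_cond big_enum_cond. Qed.

Lemma sum_cuts_empty_lower n (P : {set {set 'I_n}}) (G : seq ncp -> R) :
  \sum_(c <- cuts (mkncp P) | c.1.2 == [::]) G c.2 = G (ubar_empty (mkncp P)).
Proof.
rewrite /cuts /= big_map -/(lowersets P) sum_lowersets /=.
rewrite (eq_bigl (pred1 set0)) ?big_pred1_eq // => L /=.
rewrite /lword; have [->|L0] := eqVneq L set0; last by rewrite andbA andbF.
by rewrite powersetE sub0set lowerset0.
Qed.

Lemma sum_allcuts_empty_lower w (G : seq ncp -> R) :
  \sum_(d <- allcuts w | d.1 == [::]) G d.2 = G (ubars_empty w).
Proof.
elim: w G => [|[n P] w IH] G; first by rewrite /= big_cons big_nil /= addr0.
rewrite /= big_mkcond big_allpairs_dep /=.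
rewrite (eq_bigr (fun c : bool * seq ncp * seq ncp =>
  if c.1.2 == [::] then G (c.2 ++ ubars_empty w) else 0)); last first.
  move=> c _; case: eqP => [c0|/eqP c0]; last by rewrite big1 // => d _; case: c.1.2 c0.
  by rewrite -(IH (fun s => G (c.2 ++ s))) [RHS]big_mkcond c0.
by rewrite -big_mkcond (sum_cuts_empty_lower P (fun s => G (s ++ ubars_empty w))).
Qed.

Lemma hshuffle_nil (f g : seq ncp -> R) : hshuffle f g [::] = 0.
Proof. by rewrite /hshuffle big_nil. Qed.

Lemma hshuffle_cons (f g : seq ncp -> R) n (P : {set {set 'I_n}}) w :
  (forall s, size s != 1%N -> f s = 0) ->
  hshuffle f g (mkncp P :: w) =
  \sum_(L <- lowersets P | first_in L) f [:: restr P (cover L)] * g (ubar P L ++ ubars_empty w).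
Proof.
move=> f0; rewrite /hshuffle /mcuts big_allpairs_dep big_filter /cuts /= big_map.
apply: eq_bigr => L fL /=.
rewrite /lword (negbTE (first_in_neq0 fL)) big_mkcond.
rewrite (eq_bigr (fun d : seq ncp * seq ncp => if d.1 == [::] then
   f [:: restr P (cover L)] * g (ubar P L ++ d.2) else 0)); last first.
  by move=> d _; case: eqP => [->|/eqP d0] //; rewrite f0 ?mul0r //; case: d.1 d0.
by rewrite -big_mkcond -mulr_sumr (sum_allcuts_empty_lower w (fun s => g (ubar P L ++ s))).
Qed.

End Cuts.

Section JMoments.
Variable R : comNzRingType.
Variable k : nat -> R.
Local Open Scope ring_scope.

Definition jmoment (p : ncp) : R :=
  let: existT n P := p in if P == Jn n then moment k n else 0.

Definition jmoment_prod (w : seq ncp) : R := \prod_(p <- w) jmoment p.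

Lemma jmoment_restrT n (P : {set {set 'I_n}}) :
  partition P [set: 'I_n] -> jmoment (restr P setT) = jmoment (mkncp P).
Proof.
move=> pP; rewrite /jmoment /= (restrict_eqJ pP (subxx _)) (eqJ_partition pP) cardsT card_ord.
by congr (if _ then _ else _); apply: eq_forallb => B; rewrite setIT.
Qed.

Lemma jmoment_prod_ubars_empty w : validw w -> jmoment_prod (ubars_empty w) = jmoment_prod w.
Proof.
elim: w => [|[n P] w IH] //= /andP [/andP [n0 /andP [pP _]] vw].
rewrite /ubars_empty /= -/(ubars_empty w) ubar_set0 // /jmoment_prod /= !big_cons.
by rewrite -!/(jmoment_prod _) IH // jmoment_restrT.
Qed.

Lemma jmoment_restr_Jn n (X : {set 'I_n}) : jmoment (restr (Jn n) X) = moment k #|X|.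
Proof. by rewrite /jmoment /= restrict_Jn. Qed.

End JMoments.

Section CutSums.
Variable R : comNzRingType.
Local Open Scope ring_scope.

Lemma sum_einf_cuts n (P : {set {set 'I_n}}) : (0 < n)%N -> isNCP P ->
  \sum_(L <- lowersets P | first_in L) @einf R [:: restr P (cover L)] = 1.
Proof.
move=> n0 /andP [pP ncP]; set z := Ordinal n0; have z0 : val z = 0 by [].
have zP : z \in cover P by rewrite (cover_partition pP) inE.
set B0 := pblock P z; have B0P : B0 \in P := pblock_mem zP.
rewrite sum_lowersets (bigD1 [set B0]) /=; last first.
  by rewrite powersetE sub1set B0P lowerset_first_block // (first_inE _ z0) cover1 mem_pblock.
rewrite (card_restrict_cover pP) ?sub1set // cards1 eqxx big1 ?addr0 // => L.
case/andP => /andP [+ /andP [_]]; rewrite powersetE (first_inE _ z0) => LP zL LB0.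
rewrite (card_restrict_cover pP LP); case: (boolP (#|L| == 1%N)) => // /cards1P [B eL].
move: zL LB0 LP; rewrite eL cover1 sub1set => zB + BP.
by rewrite /B0 (def_pblock (partition_trivIset pP) BP zB) eqxx.
Qed.

Variable k : nat -> R.

Lemma jmoment_prod_ubar_Jn n (L : {set {set 'I_n}}) :
  jmoment_prod k (ubar (Jn n) L) = \prod_(i < #|cover L|.+1) momentX k (gap (cover L) i).
Proof.
rewrite /jmoment_prod /ubar big_map big_filter big_mkcond -[iota _ _]/(index_iota 0 _.+1).
rewrite big_mkord; apply: eq_bigr => i _; rewrite jmoment_restr_Jn -momentX_card.
by case: eqVneq => [->|//]; rewrite momentX0.
Qed.

Lemma moment_cuts_Jn n : (0 < n)%N ->
  moment k n = \sum_(L <- lowersets (Jn n) | first_in L)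
                 kappa k [:: restr (Jn n) (cover L)] * jmoment_prod k (ubar (Jn n) L).
Proof.
move=> n0; set z := Ordinal n0; have z0 : val z = 0 by [].
rewrite /moment -/(momentX k [set: 'I_n]) (moment_recursion k z0) sum_lowersets.
rewrite (reindex_onto (@singletons n) (@cover _)) => [|L]; last first.
  by rewrite powersetE => /andP [LJ _]; apply: singletons_cover.
apply: eq_big => [S|S _]; last first.
  by rewrite /kappa /= cover_singletons restrict_Jn jmoment_prod_ubar_Jn cover_singletons.
by rewrite cover_singletons eqxx andbT (first_inE _ z0) cover_singletons powersetE
  singletons_sub_Jn lowerset_Jn ?singletons_sub_Jn.
Qed.

Lemma kappa_cut_eq0 n (P L : {set {set 'I_n}}) B :
  isNCP P -> lowerset P L -> B \in P -> (1 < #|B|)%N ->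
  kappa k [:: restr P (cover L)] * jmoment_prod k (ubar P L) = 0.
Proof.
move=> /andP [pP _] low BP B2; have [BL|BL] := boolP (B \in L).
  rewrite /kappa /= (restrict_neqJ pP BP B2) ?mul0r //.
  by apply/subsetP => x xB; apply/bigcupP; exists B.
have [i ile Bi] := block_sub_gap pP low BP BL.
have gi : gap (cover L) i != set0.
  by case/set0Pn: (partition_neq0 pP BP) => x xB; apply/set0Pn; exists x; apply: (subsetP Bi).
have mem : restr P (gap (cover L) i) \in ubar P L.
  by apply: map_f; rewrite mem_filter gi mem_iota add0n ltnS ile.
by rewrite /jmoment_prod (big_rem _ mem) /= /jmoment /= (restrict_neqJ pP BP B2 Bi) mul0r mulr0.
Qed.

Lemma jmoment_cuts n (P : {set {set 'I_n}}) : (0 < n)%N -> isNCP P ->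
  jmoment k (mkncp P) = \sum_(L <- lowersets P | first_in L)
                          kappa k [:: restr P (cover L)] * jmoment_prod k (ubar P L).
Proof.
move=> n0 ncP; have pP : partition P _ := proj1 (andP ncP).
rewrite /jmoment /=; have [->|PJ] := eqVneq P (Jn n); first exact: moment_cuts_Jn.
move: PJ; rewrite (eqJ_partition pP) negb_forall_in => /existsP [B /andP [BP]].
rewrite -ltnNge => B2; rewrite sum_lowersets big1 // => L /andP [_ /andP [low _]].
exact: kappa_cut_eq0 ncP low BP B2.
Qed.

End CutSums.

Section Exponentials.
Variable R : comNzRingType.
Local Open Scope ring_scope.

Lemma is_exp_unique (f phi1 phi2 : seq ncp -> R) :
  (forall s, size s != 1%N -> f s = 0) -> is_exp f phi1 -> is_exp f phi2 ->
  forall w, validw w -> phi1 w = phi2 w.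
Proof.
(* Induction on [msize]: a cut with [1 \in L] leaves fewer points in [\overline U]. *)
move=> f0 e1 e2 w; elim: {w}(msize w).+1 {-2}w (ltnSn (msize w)) => // N IH.
case=> [|[n P] w] szw vw; first by rewrite e1 // e2 // !hshuffle_nil.
have /= /andP [/andP [n0 ncP] /ubars_empty_valid [vw' szw']] := vw.
rewrite e1 // e2 // !(hshuffle_cons _ _ _ f0); congr (_ + _); apply: eq_bigr => L fL.
have [vL szL] := ubar_valid L ncP.
congr (_ * _); apply: IH; last by rewrite /validw all_cat -!/(validw _) vL vw'.
rewrite msize_cat szL szw' -ltnS (leq_trans _ szw) // /msize /= ltnS ltn_add2r.
by apply: (card_setC_lt (z := Ordinal n0)); rewrite -(first_inE _ (erefl : val (Ordinal n0) = 0)).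
Qed.

Lemma einf_size_neq1 (s : seq ncp) : size s != 1%N -> @einf R s = 0.
Proof. by case: s => [|? []]. Qed.

Lemma kappa_size_neq1 (k : nat -> R) (s : seq ncp) : size s != 1%N -> kappa k s = 0.
Proof. by case: s => [|? []]. Qed.

Lemma is_exp_einf : is_exp (@einf R) (fun=> 1).
Proof.
move=> [|[n P] w] vw; first by rewrite hshuffle_nil /eps eqxx addr0.
have /= /andP [/andP [n0 ncP] _] := vw.
rewrite (hshuffle_cons _ _ _ einf_size_neq1).
by rewrite /eps add0r (eq_bigr _ (fun L _ => mulr1 _)) sum_einf_cuts.
Qed.

Variable k : nat -> R.

Lemma is_exp_kappa : is_exp (kappa k) (jmoment_prod k).
Proof.
move=> [|[n P] w] vw; first by rewrite hshuffle_nil /eps eqxx addr0 /jmoment_prod big_nil.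
have /= /andP [/andP [n0 ncP] vw'] := vw.
rewrite (hshuffle_cons _ _ _ (kappa_size_neq1 k)).
rewrite /eps add0r {1}/jmoment_prod big_cons -/(jmoment_prod k w) (jmoment_cuts k n0 ncP).
rewrite mulr_suml; apply: eq_bigr => L _.
by rewrite /jmoment_prod big_cat /= -mulrA -!/(jmoment_prod k _) jmoment_prod_ubars_empty.
Qed.

End Exponentials.

Section RefineSum.
Variable R : comNzRingType.
Variable k : nat -> R.
Local Open Scope ring_scope.

Definition refine_sum n (P : {set {set 'I_n}}) : R :=
  \sum_(Q : {set {set 'I_n}} | isNCP Q && refines P Q) \prod_(tau in Q) Kchar k (restr P tau).

Lemma refine_sum_Jn n : refine_sum (Jn n) = moment k n.
Proof.
apply: eq_big => [Q|Q _]; last first.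
  by apply: eq_bigr => tau _; rewrite /Kchar /kappa /= restrict_Jn.
case ncQ: (isNCP Q) => //=; have pQ : partition Q _ := proj1 (andP ncQ).
apply/forall_inP => _ /imsetP [i _ ->].
have iQ : i \in cover Q by rewrite (cover_partition pQ) inE.
by apply/exists_inP; exists (pblock Q i); rewrite ?pblock_mem ?sub1set ?mem_pblock.
Qed.

Lemma refine_sum_eq0 n (P : {set {set 'I_n}}) : isNCP P -> P != Jn n -> refine_sum P = 0.
Proof.
case/andP => pP _; rewrite (eqJ_partition pP) negb_forall_in => /existsP [B /andP [BP]].
rewrite -ltnNge => B2; apply: big1 => Q /andP [_ /forall_inP /(_ B BP) /exists_inP [C CQ BC]].
by rewrite (bigD1 C) //= /Kchar /kappa /= (restrict_neqJ pP BP B2 BC) mul0r.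
Qed.

Lemma refine_sumE n (P : {set {set 'I_n}}) :
  isNCP P -> refine_sum P = if P == Jn n then moment k n else 0.
Proof. by move=> ncP; case: eqVneq => [->|]; [apply: refine_sum_Jn|apply: refine_sum_eq0]. Qed.

Lemma validw_toH n (P : {set {set 'I_n}}) : isNCP P -> validw (toH P).
Proof.
by rewrite /toH; case: eqP => //= /eqP n0 ncP; rewrite /validw /= andbT /ncp_ok /= lt0n n0.
Qed.

Lemma coact_exp_einf (psi : seq ncp -> R) n (P : {set {set 'I_n}}) :
  is_exp (@einf R) psi -> coact psi (Kchar k) P = refine_sum P.
Proof.
move=> epsi; apply: eq_bigr => Q /andP [ncQ _].
by rewrite (is_exp_unique (@einf_size_neq1 R) epsi (@is_exp_einf R)) ?mul1r ?validw_toH.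
Qed.

Lemma exp_kappa_toH (phi : seq ncp -> R) n (P : {set {set 'I_n}}) :
  is_exp (kappa k) phi -> isNCP P -> phi (toH P) = if P == Jn n then moment k n else 0.
Proof.
move=> ephi ncP; have pP : partition P _ := proj1 (andP ncP).
rewrite (is_exp_unique (kappa_size_neq1 k) ephi (is_exp_kappa k)) ?validw_toH //.
rewrite /toH; case: eqP => [n0|/eqP n0]; last by rewrite /jmoment_prod big_seq1.
rewrite /jmoment_prod big_nil; subst n; rewrite moment0 (eqJ_partition pP).
suff -> : [forall B in P, #|B| <= 1]%N by [].
by apply/forall_inP => B _; rewrite (_ : B = set0) ?cards0 //; apply/setP => [[]].
Qed.

End RefineSum.

Theorem mainTheorem14 (R : fieldType) (k : nat -> R) :
  (exists phi : seq ncp -> R, is_exp (kappa k) phi) /\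
  (exists psi : seq ncp -> R, is_exp (@einf R) psi) /\
  (forall phi psi : seq ncp -> R,
     is_exp (kappa k) phi -> is_exp (@einf R) psi ->
     forall (n : nat) (P : {set {set 'I_n}}), isNCP P ->
       [/\ phi (toH P) = coact psi (Kchar k) P,
           coact psi (Kchar k) P =
             (\sum_(Q : {set {set 'I_n}} | isNCP Q && refines P Q)
                \prod_(tau in Q) Kchar k (restr P tau))%R,
           (#|P| < n)%N ->
             (\sum_(Q : {set {set 'I_n}} | isNCP Q && refines P Q)
                \prod_(tau in Q) Kchar k (restr P tau))%R = 0%R
         & #|P| = n ->
             (\sum_(Q : {set {set 'I_n}} | isNCP Q && refines P Q)
                \prod_(tau in Q) Kchar k (restr P tau))%R =
             (\sum_(Q : {set {set 'I_n}} | isNCP Q)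
                \prod_(pi in Q) k #|pi|)%R]).
Proof.
split; first by exists (jmoment_prod k); apply: is_exp_kappa.
split; first by exists (fun=> 1%R); apply: is_exp_einf.
move=> phi psi ephi epsi n P ncP.
rewrite -/(refine_sum k P) -/(moment k n) (coact_exp_einf k P epsi).
rewrite (exp_kappa_toH ephi ncP) refine_sumE // (eqJ_card (proj1 (andP ncP))).
split=> // [/ltn_eqF -> //|->]; by rewrite eqxx.
Qed.
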